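(* Let $p$ be a prime with $p\equiv 1\pmod 8$, let $n$ be the least integer with $2^n>p$, let $N=2^n$, and let $\theta=\arccos\!\left(1-\frac{N}{p-1}\right)$. For $x\in\{0,1,\ldots,N-1\}$ let $x_0$ be the least significant bit of $x$ and let $f(x)=1$ if $0\le x<p$ and $\left(\frac{x}{p}\right)=-1$, and $f(x)=0$ otherwise. Define amplitudes $\alpha_x=\frac{1}{\sqrt N}e^{i\theta f(x)(1-2x_0)}$ for $0\le x<N$, let $\bar\alpha=\frac{1}{N}\sum_{x=0}^{N-1}\alpha_x$, and let $\beta_x=2\bar\alpha-\alpha_x$ (the result of inversion about the mean, as implemented by a Grover diffusion step). Then $\bar\alpha=\frac{1}{2\sqrt N}$, $\beta_x=\frac{1}{\sqrt N}\bigl(1-e^{i\theta f(x)(1-2x_0)}\bigr)$, $\beta_x=0$ whenever $f(x)=0$, and $|\beta_x|^2=\frac{2}{p-1}$ whenever $f(x)=1$. Consequently, measuring the state $\sum_x\beta_x|x\rangle$ in the computational basis yields a quadratic nonresidue modulo $p$ with probability $1$, uniformly distributed over the $\frac{p-1}{2}$ quadratic nonresidues in $\{1,\ldots,p-1\}$.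
   Context: $\left(\frac{x}{p}\right)$ denotes the Legendre (Jacobi) symbol modulo the odd prime $p$: $1$ for quadratic residues, $-1$ for quadratic nonresidues, $0$ for $x\equiv 0\pmod p$. A quadratic nonresidue modulo $p$ is an integer $a$ coprime to $p$ such that $x^2\equiv a\pmod p$ has no solution. *)

From Stdlib Require Import Reals ZArith.
From Coquelicot Require Import Coquelicot.
From mathcomp Require Import ssreflect ssrfun ssrbool eqtype ssrnat div seq fintype bigop prime.

Set Implicit Arguments.
Unset Strict Implicit.
Unset Printing Implicit Defensive.

Definition sq_solvable (a p : nat) : bool :=
  [exists y : 'I_p, (y ^ 2 == a %[mod p])%N].

Definition legendre (a p : nat) : Z :=
  if (p %| a)%N then 0%Z else if sq_solvable a p then 1%Z else (-1)%Z.

Definition qnr (a p : nat) : bool := coprime a p && ~~ sq_solvable a p.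

Definition foracle (p x : nat) : bool := (x < p)%N && Z.eqb (legendre x p) (-1)%Z.

Definition lsb (x : nat) : nat := x %% 2.

Definition cexpi (t : R) : C := (cos t, sin t).

Definition theta (p N : nat) : R := acos (1 - INR N / INR (p - 1)).

Definition phase (p N x : nat) : R :=
  (theta p N * INR (nat_of_bool (foracle p x)) * (1 - 2 * INR (lsb x)))%R.

Definition alpha (p N x : nat) : C :=
  Cmult (RtoC (/ sqrt (INR N))) (cexpi (phase p N x)).

Definition alpha_bar (p N : nat) : C :=
  Cmult (RtoC (/ INR N)) (\big[Cplus/RtoC 0]_(x < N) alpha p N x).

Definition beta (p N x : nat) : C :=
  Cminus (Cmult (RtoC 2) (alpha_bar p N)) (alpha p N x).

From Stdlib Require Import Reals ZArith Lia Lra.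
From Coquelicot Require Import Coquelicot.
From HB Require Import structures.
From mathcomp Require Import ssreflect ssrfun ssrbool eqtype ssrnat div seq fintype bigop prime.
From mathcomp Require Import binomial ssralg zmodp zify.

(* The oracle marks exactly the (p-1)/2 quadratic nonresidues in [1, p).  Since
   p = 1 (mod 4) (all that is used of p = 1 mod 8), -1 is a square mod p, so
   x |-> p - x permutes the nonresidues and, p being odd, swaps even and odd x: the
   phases +theta and -theta cancel in the imaginary part of the sum of the alpha_x.
   The real part is N - (p-1)/2 * (1 - cos theta) = N/2 because cos theta = 1 - N/(p-1),
   an admissible cosine since the least power of two above p is at most 2(p-1).
   Hence the mean is 1/(2 sqrt N), beta_x = (1 - e^{i phase_x}) / sqrt N vanishes off
   the nonresidues and |beta_x|^2 = (2 - 2 cos theta) / N = 2/(p-1) on them. *)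

Set Implicit Arguments.
Unset Strict Implicit.
Unset Printing Implicit Defensive.

(* ssralg rebinds the key %R to ring_scope; the statement uses it for Stdlib reals. *)
Delimit Scope R_scope with R.

Lemma big_ord_trunc (T : Type) (idx : T) (op : Monoid.law idx) (m n : nat) (F : nat -> T) :
  (m <= n)%N -> (forall i, (m <= i)%N -> F i = idx) ->
  \big[op/idx]_(i < n) F i = \big[op/idx]_(i < m) F i.
Proof.
move=> le_mn F_idx; rewrite (big_ord_widen _ F le_mn) [RHS]big_mkcond.
by apply: eq_bigr => i _; case: ltnP => // /F_idx.
Qed.

Section SquaresModPrime.

Import GRing.Theory.
Local Open Scope ring_scope.

Variable p : nat.
Hypothesis p_pr : prime p.

Local Notation h := ((p - 1) %/ 2)%N.

Lemma Fp_nat_eq (a b : nat) : ((a%:R : 'F_p) == b%:R) = (a == b %[mod p])%N.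
Proof. by rewrite -val_eqE /= !(val_Fp_nat p_pr). Qed.

Lemma Fp_nat_eq0 (a : nat) : ((a%:R : 'F_p) == 0) = (p %| a)%N.
Proof. by rewrite -[0]/(0%N%:R) Fp_nat_eq mod0n. Qed.

Lemma sq_solvableP (a : nat) :
  reflect (exists z : nat, (z%:R : 'F_p) ^+ 2 = a%:R) (sq_solvable a p).
Proof.
apply: (iffP existsP) => [[y /eqP y2a] | [z z2a]].
  by exists y; apply/eqP; rewrite -natrX Fp_nat_eq y2a.
exists (Ordinal (ltn_pmod z (prime_gt0 p_pr))).
by rewrite /= -Fp_nat_eq natrX (Fp_nat_mod p_pr) z2a.
Qed.

Lemma qnr_sq_solvable (a : nat) : (0 < a < p)%N -> qnr a p = ~~ sq_solvable a p.
Proof.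
move=> /andP[a_gt0 a_ltp]; rewrite /qnr coprime_sym prime_coprime //.
by rewrite gtnNdvd.
Qed.

Lemma ffact_pred_Fp (m : nat) : (m < p)%N ->
  ((p.-1 ^_ m)%:R : 'F_p) = (-1) ^+ m * m`!%:R.
Proof.
elim: m => [|m IHm] m_ltp; first by rewrite ffactn0 fact0 mul1r.
rewrite ffactnSr natrM IHm 1?ltnW // factS natrM exprS.
rewrite (_ : p.-1 - m = p - m.+1)%N; last by lia.
rewrite natrB 1?ltnW // (pchar_Fp_0 p_pr) sub0r.
by rewrite mulrN mulN1r mulNr (mulrC m.+1%:R) mulrA.
Qed.

(* By Wilson, -1 = (p-1)! = (p-1)...(p-h) * h! = (-1)^h (h!)^2, and h is even. *)
Lemma fact_half_sqr_Fp : (p %% 4 = 1)%N -> ((h`!)%:R : 'F_p) ^+ 2 = -1.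
Proof.
move=> p4.
have wilson : ((p.-1)`!)%:R = (-1 : 'F_p).
  move: (Wilson (prime_gt1 p_pr)); rewrite p_pr => /esym; rewrite -Fp_nat_eq0 -natr1.
  by rewrite addr_eq0 => /eqP.
rewrite -wilson -(ffact_fact (_ : h <= p.-1)%N); last by lia.
rewrite (_ : p.-1 - h = h)%N; last by lia.
rewrite natrM ffact_pred_Fp; last by lia.
rewrite (_ : h = 2 * (p %/ 4))%N; last by lia.
by rewrite exprM sqrrN !expr1n mul1r expr2.
Qed.

Lemma sq_solvable_sub (x : nat) : (p %% 4 = 1)%N -> (x <= p)%N ->
  sq_solvable (p - x) p = sq_solvable x p.
Proof.
move=> p4.
have sq_sub y : (y <= p)%N -> sq_solvable y p -> sq_solvable (p - y) p.
  move=> y_lep /sq_solvableP[z z2y]; apply/sq_solvableP.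
  exists (h`! * z)%N; rewrite natrM exprMn fact_half_sqr_Fp // z2y.
  by rewrite natrB // (pchar_Fp_0 p_pr) sub0r mulN1r.
move=> x_lep; apply/idP/idP; last exact: sq_sub.
by move=> /(sq_sub _ (leq_subr x p)); rewrite subKn.
Qed.

Lemma sqr_Fp_inj_half (i j : nat) : (0 < i <= h)%N -> (0 < j <= h)%N ->
  (i%:R : 'F_p) ^+ 2 = j%:R ^+ 2 -> i = j.
Proof.
move=> i_half j_half /eqP; rewrite eqf_sqr => /orP[|].
  by rewrite Fp_nat_eq !modn_small; [move=> /eqP | lia | lia].
rewrite -addr_eq0 -natrD Fp_nat_eq0 => /dvdn_leq; lia.
Qed.

Section OddPrime.

Hypothesis p_odd : odd p.

Lemma sq_solvable_half (a : nat) : (0 < a < p)%N -> sq_solvable a p ->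
  exists2 t, (0 < t <= h)%N & (t%:R : 'F_p) ^+ 2 = a%:R.
Proof.
move=> a_range /sq_solvableP[z z2a].
have r_ltp : (z %% p < p)%N by rewrite ltn_pmod ?prime_gt0.
have r2a : ((z %% p)%:R : 'F_p) ^+ 2 = a%:R by rewrite (Fp_nat_mod p_pr).
have r_gt0 : (0 < z %% p)%N.
  rewrite lt0n; apply/eqP => r0; move: r2a; rewrite r0 expr2 mulr0 => /esym/eqP.
  by rewrite Fp_nat_eq0 gtnNdvd //; case/andP: a_range.
case: (leqP (z %% p) h) => r_half; first by exists (z %% p); rewrite ?r_gt0.
exists (p - z %% p)%N; first by lia.
by rewrite natrB 1?ltnW // (pchar_Fp_0 p_pr) sub0r sqrrN.
Qed.

Lemma card_sq_solvable :
  #|[pred a : 'I_p | (0 < a)%N && sq_solvable a p]| = h.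
Proof.
pose sq (i : 'I_h) : 'I_p := Ordinal (ltn_pmod (i.+1 ^ 2) (prime_gt0 p_pr)).
have sq_inj : injective sq.
  move=> i j /(congr1 val) /= /eqP; rewrite -Fp_nat_eq !natrX => /eqP ij.
  by apply/val_inj/succn_inj/(sqr_Fp_inj_half _ _ ij); rewrite ltn_ord.
rewrite -[RHS]card_ord -(card_codom sq_inj); apply: eq_card => a; rewrite !inE.
apply/andP/codomP => [[a_gt0 /(sq_solvable_half _)[|t t_half t2a]] | [i ->{a}]].
- by rewrite a_gt0 ltn_ord.
- have t_lt : (t.-1 < h)%N by lia.
  exists (Ordinal t_lt); apply: val_inj => /=.
  rewrite prednK; last by case/andP: t_half.
  by move: t2a; rewrite -natrX => /eqP; rewrite Fp_nat_eq (modn_small (ltn_ord a)) => /eqP ->.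
- have i_lt : (i.+1 < p)%N by have := ltn_ord i; lia.
  split; last by apply/sq_solvableP; exists i.+1; rewrite /= (Fp_nat_mod p_pr) natrX.
  by rewrite /= lt0n -/(dvdn p _) (Euclid_dvdX _ _ p_pr) gtnNdvd.
Qed.

Lemma card_qnr : #|[pred a : 'I_p | (0 < a)%N && qnr a p]| = h.
Proof.
pose pos := [pred a : 'I_p | (0 < a)%N].
pose sq := [pred a : 'I_p | sq_solvable a p].
have card_pos : #|pos| = p.-1.
  rewrite -[p in RHS]card_ord -(cardC1 (Ordinal (prime_gt0 p_pr))).
  by apply: eq_card => a; rewrite !inE lt0n -val_eqE.
have card_pos_sq : #|[predI pos & sq]| = h.
  by rewrite -card_sq_solvable; apply: eq_card => a; rewrite !inE.
have -> : #|[pred a : 'I_p | (0 < a)%N && qnr a p]| = #|[predD pos & sq]|.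
  apply: eq_card => a; rewrite !inE; case: (posnP a) => [-> | a_gt0].
    by rewrite andbF.
  by rewrite andbT qnr_sq_solvable // a_gt0 ltn_ord.
have p_half : (p.-1 = h + h)%N by lia.
by apply/eqP; rewrite -(eqn_add2l h) -p_half -card_pos_sq -card_pos cardID.
Qed.

End OddPrime.

End SquaresModPrime.

Section Oracle.

Variable p : nat.

Lemma foracle_ge (x : nat) : (p <= x)%N -> foracle p x = false.
Proof. by rewrite /foracle leqNgt => /negbTE ->. Qed.

Hypothesis p_pr : prime p.

Lemma foracleE (x : nat) : foracle p x = (0 < x < p)%N && qnr x p.
Proof.
case: (ltnP x p) => [x_ltp | /foracle_ge ->]; last by rewrite andbF.
rewrite /foracle /legendre x_ltp andbT; case: (posnP x) => [-> | x_gt0].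
  by rewrite dvdn0.
by rewrite gtnNdvd // qnr_sq_solvable ?x_gt0 //; case: sq_solvable.
Qed.

Lemma foracle_sub (x : nat) : (p %% 4 = 1)%N -> (0 < x < p)%N ->
  foracle p (p - x) = foracle p x.
Proof.
move=> p4 x_range; have px_range : (0 < p - x < p)%N by lia.
rewrite !foracleE x_range px_range !qnr_sq_solvable //.
by rewrite sq_solvable_sub // ltnW //; case/andP: x_range.
Qed.

Lemma sum_foracle (M : nat) : odd p -> (p <= M)%N ->
  (\sum_(x < M) foracle p x)%N = ((p - 1) %/ 2)%N.
Proof.
move=> p_odd le_pM.
pose F x := nat_of_bool (foracle p x).
rewrite (big_ord_trunc (F := F) _ le_pM) => [|x /foracle_ge f_x]; last by rewrite /F f_x.
rewrite -(card_qnr p_pr p_odd) -sum1_card [RHS]big_mkcond /=.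
by apply: eq_bigr => x _; rewrite /F foracleE inE ltn_ord andbT; case: (_ && _).
Qed.

End Oracle.

Lemma Rplus_assoc_law : associative Rplus.
Proof. by move=> x y z; rewrite Rplus_assoc. Qed.

HB.instance Definition _ :=
  Monoid.isComLaw.Build R 0%R Rplus Rplus_assoc_law Rplus_comm Rplus_0_l.

Lemma big_INR (I : Type) (r : seq I) (P : pred I) (F : I -> nat) :
  \big[Rplus/0%R]_(i <- r | P i) INR (F i) = INR (\sum_(i <- r | P i) F i).
Proof. by apply: esym; apply: big_morph => [m n|]; first exact: plus_INR. Qed.

Lemma Rsum_scale (I : Type) (r : seq I) (P : pred I) (b : R) (F : I -> R) :
  \big[Rplus/0%R]_(i <- r | P i) (b * F i)%R = (b * \big[Rplus/0%R]_(i <- r | P i) F i)%R.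
Proof.
by apply: esym; apply: big_morph => [x y|]; [apply: Rmult_plus_distr_l | apply: Rmult_0_r].
Qed.

Lemma Rsum_ord_const (n : nat) (a : R) :
  \big[Rplus/0%R]_(i < n) a = (INR n * a)%R.
Proof.
rewrite big_const_ord; elim: n => [|n IHn]; first by rewrite /=; ring.
by rewrite iterS IHn S_INR; ring.
Qed.

Lemma Rsum_antisym (n : nat) (F : nat -> R) :
  F 0%N = 0%R -> (forall i, (0 < i < n)%N -> F (n - i)%N = (- F i)%R) ->
  \big[Rplus/0%R]_(i < n) F i = 0%R.
Proof.
move=> F0 F_anti; case: n F_anti => [|n] F_anti; first by rewrite big_ord0.
rewrite -(big_mkord xpredT) big_ltn // F0 Rplus_0_l.
set S := \big[Rplus/0%R]_(1 <= i < n.+1) F i.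
suff : S = (- S)%R by lra.
rewrite {1}/S big_nat_rev (eq_big_nat _ _ (F2 := fun i => - F i)%R); last first.
  by move=> i i_range; rewrite add1n subSS F_anti.
by apply: esym; apply: big_morph => [x y|]; [apply: Ropp_plus_distr | apply: Ropp_0].
Qed.

Lemma Cmod_sqr_1_sub_cexpi (t : R) : (Cmod (1 - cexpi t) ^ 2 = 2 - 2 * cos t)%R.
Proof. rewrite Cmod2_alt /=; move: (sin2_cos2 t); rewrite /Rsqr; nra. Qed.

Lemma phase_foracle_false (p N x : nat) : foracle p x = false -> phase p N x = 0%R.
Proof. by rewrite /phase => ->; rewrite /= Rmult_0_r Rmult_0_l. Qed.

Lemma phase_foracle_true (p N x : nat) : foracle p x = true ->
  phase p N x = if odd x then (- theta p N)%R else theta p N.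
Proof. by rewrite /phase /lsb modn2 => ->; case: (odd x) => /=; ring. Qed.

Lemma cos_phase (p N x : nat) :
  cos (phase p N x) = (1 + (cos (theta p N) - 1) * INR (foracle p x))%R.
Proof.
case f_x: (foracle p x); last by rewrite phase_foracle_false // cos_0 /=; ring.
by rewrite phase_foracle_true //; case: (odd x); rewrite ?cos_neg /=; ring.
Qed.

Lemma Csum_pair (I : Type) (r : seq I) (P : pred I) (F : I -> C) :
  \big[Cplus/RtoC 0]_(i <- r | P i) F i =
  (\big[Rplus/0%R]_(i <- r | P i) Re (F i), \big[Rplus/0%R]_(i <- r | P i) Im (F i)).
Proof. by apply: injective_projections; apply: big_morph. Qed.

Lemma Csum_scale (I : Type) (r : seq I) (P : pred I) (z : C) (F : I -> C) :
  \big[Cplus/RtoC 0]_(i <- r | P i) (z * F i)%C = (z * \big[Cplus/RtoC 0]_(i <- r | P i) F i)%C.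
Proof.
by apply: esym; apply: big_morph => [u v|]; [apply: Cmult_plus_distr_l | apply: Cmult_0_r].
Qed.

Section Diffusion.

Variables p N : nat.
Hypotheses (p_pr : prime p) (p4 : (p %% 4 = 1)%N).
Hypotheses (le_pN : (p <= N)%N) (N_le : (N <= 2 * (p - 1))%N).

Lemma INR_pred_gt0 : (0 < INR (p - 1))%R.
Proof. by apply: lt_0_INR; have := prime_gt1 p_pr; lia. Qed.

Lemma INR_N_gt0 : (0 < INR N)%R.
Proof. by apply: lt_0_INR; have := prime_gt1 p_pr; lia. Qed.

Lemma INR_sum_foracle : INR (\sum_(x < N) foracle p x) = (INR (p - 1) / 2)%R.
Proof.
rewrite sum_foracle //; last by lia.
rewrite {2}(_ : p - 1 = 2 * ((p - 1) %/ 2))%N; last by lia.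
by rewrite mult_INR /=; field.
Qed.

Lemma cos_theta : cos (theta p N) = (1 - INR N / INR (p - 1))%R.
Proof.
have p1_gt0 := INR_pred_gt0; have N_ge0 := pos_INR N.
have N_le_R : (INR N <= 2 * INR (p - 1))%R.
  by rewrite -[2%R]/(INR 2) -mult_INR; apply: le_INR; apply/leP.
rewrite /theta cos_acos //; set q := (INR N / INR (p - 1))%R.
have q_def : (q * INR (p - 1) = INR N)%R by rewrite /q; field; lra.
split; nra.
Qed.

Lemma phase_sub (x : nat) : (0 < x < p)%N -> phase p N (p - x) = (- phase p N x)%R.
Proof.
move=> x_range; case f_x: (foracle p x).
  rewrite !phase_foracle_true ?foracle_sub // oddB; last by lia.
  have -> : odd p by lia.
  by case: (odd x); rewrite /= ?Ropp_involutive.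
by rewrite !phase_foracle_false ?foracle_sub // Ropp_0.
Qed.

Lemma sum_sin_phase : \big[Rplus/0%R]_(x < N) sin (phase p N x) = 0%R.
Proof.
pose F x := sin (phase p N x).
rewrite (big_ord_trunc (F := F) _ le_pN) => [|x /foracle_ge f_x]; last first.
  by rewrite /F phase_foracle_false // sin_0.
apply: (Rsum_antisym (F := F)) => [|x x_range]; last by rewrite /F phase_sub // sin_neg.
by rewrite /F phase_foracle_false ?sin_0 // foracleE.
Qed.

Lemma sum_cos_phase : \big[Rplus/0%R]_(x < N) cos (phase p N x) = (INR N / 2)%R.
Proof.
have p1_gt0 := INR_pred_gt0.
under eq_bigr => x _ do rewrite cos_phase.
rewrite big_split Rsum_scale /= Rsum_ord_const big_INR INR_sum_foracle cos_theta.
by field; lra.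
Qed.

Lemma alpha_bar_eq : alpha_bar p N = RtoC (/ (2 * sqrt (INR N))).
Proof.
have N_gt0 := INR_N_gt0; have sqrtN_gt0 := sqrt_lt_R0 _ N_gt0.
have sum_cexpi : \big[Cplus/RtoC 0]_(x < N) cexpi (phase p N x) = RtoC (INR N / 2).
  by rewrite Csum_pair /= sum_cos_phase sum_sin_phase.
rewrite /alpha_bar /alpha Csum_scale sum_cexpi -!RtoC_mult.
by f_equal; field; split; lra.
Qed.

Lemma beta_eq (x : nat) :
  beta p N x = (RtoC (/ sqrt (INR N)) * (1 - cexpi (phase p N x)))%C.
Proof.
have N_gt0 := INR_N_gt0; have sqrtN_gt0 := sqrt_lt_R0 _ N_gt0.
rewrite /beta alpha_bar_eq /alpha.
by apply: injective_projections => /=; field; lra.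
Qed.

Lemma beta_foracle_false (x : nat) : foracle p x = false -> beta p N x = RtoC 0.
Proof.
move=> f_x; rewrite beta_eq phase_foracle_false // /cexpi cos_0 sin_0.
by apply: injective_projections => /=; ring.
Qed.

Lemma Cmod_beta_sqr_foracle (x : nat) : foracle p x = true ->
  (Cmod (beta p N x) ^ 2)%R = (2 / INR (p - 1))%R.
Proof.
move=> f_x; have p1_gt0 := INR_pred_gt0; have N_gt0 := INR_N_gt0.
rewrite beta_eq Cmod_mult Rpow_mult_distr Cmod_R pow2_abs pow_inv (pow2_sqrt _ (pos_INR N)).
rewrite Cmod_sqr_1_sub_cexpi cos_phase f_x cos_theta /=.
by field; split; lra.
Qed.

Lemma sum_Cmod_beta_sqr : \big[Rplus/0%R]_(x < N) (Cmod (beta p N x) ^ 2)%R = 1%R.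
Proof.
have beta_sqr x : (Cmod (beta p N x) ^ 2 = 2 / INR (p - 1) * INR (foracle p x))%R.
  case f_x: (foracle p x); first by rewrite Cmod_beta_sqr_foracle //=; ring.
  by rewrite beta_foracle_false // Cmod_0 /=; ring.
have p1_gt0 := INR_pred_gt0.
under eq_bigr => x _ do rewrite beta_sqr.
by rewrite Rsum_scale big_INR INR_sum_foracle; field; lra.
Qed.

Lemma sum_Cmod_beta_sqr_qnr :
  \big[Rplus/0%R]_(x < N | (0 < x < p)%N && qnr x p) (Cmod (beta p N x) ^ 2)%R = 1%R.
Proof.
rewrite -sum_Cmod_beta_sqr [LHS]big_mkcond; apply: eq_bigr => x _.
rewrite -foracleE //; case: ifPn => // /negbTE f_x.
by rewrite beta_foracle_false // Cmod_0 /=; ring.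
Qed.

End Diffusion.

Lemma pow2_min_le (p n : nat) : odd p -> (1 < p)%N ->
  (p < 2 ^ n)%N -> (forall m : nat, (p < 2 ^ m)%N -> (n <= m)%N) ->
  (2 ^ n <= 2 * (p - 1))%N.
Proof.
move=> p_odd p_gt1 p_lt n_min.
case: n p_lt n_min => [|n] p_lt n_min; first by rewrite expn0 in p_lt; lia.
have : (2 ^ n <= p)%N by rewrite leqNgt; apply/negP => /n_min; lia.
by case: n {p_lt n_min} => [|n]; rewrite !expnS; lia.
Qed.

Theorem mainTheorem3 (p n : nat) :
  prime p -> (p %% 8 = 1)%N ->
  (* n is the least integer with 2^n > p *)
  (p < 2 ^ n)%N -> (forall m : nat, (p < 2 ^ m)%N -> (n <= m)%N) ->
  let N := (2 ^ n)%N in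
  [/\ alpha_bar p N = RtoC (/ (2 * sqrt (INR N))),
      (forall x : nat, (x < N)%N ->
         beta p N x = Cmult (RtoC (/ sqrt (INR N))) (Cminus (RtoC 1) (cexpi (phase p N x)))),
      (forall x : nat, (x < N)%N -> foracle p x = false -> beta p N x = RtoC 0),
      (forall x : nat, (x < N)%N -> foracle p x = true ->
         (Cmod (beta p N x) ^ 2)%R = (2 / INR (p - 1))%R) &
      (* consequences for measuring sum_x beta_x |x> in the computational basis *)
      [/\ (\big[Rplus/0%R]_(x < N) (Cmod (beta p N x) ^ 2)%R)%R = 1%R,
          (\big[Rplus/0%R]_(x < N | (0 < x < p)%N && qnr x p) (Cmod (beta p N x) ^ 2)%R)%R = 1%R,
          (forall a : nat, (0 < a < p)%N -> qnr a p ->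
             (a < N)%N /\ (Cmod (beta p N a) ^ 2)%R = (2 / INR (p - 1))%R) &
          #|[pred a : 'I_p | (0 < a)%N && qnr a p]| = ((p - 1) %/ 2)%N]].
Proof.
move=> p_pr p8 p_lt n_min N.
have p4 : (p %% 4 = 1)%N by lia.
have p_odd : odd p by lia.
have le_pN : (p <= N)%N := ltnW p_lt.
have N_le : (N <= 2 * (p - 1))%N := pow2_min_le p_odd (prime_gt1 p_pr) p_lt n_min.
split=> [|x _|x _|x _|]; first exact: alpha_bar_eq.
- exact: beta_eq.
- exact: beta_foracle_false.
- exact: Cmod_beta_sqr_foracle.
split; [exact: sum_Cmod_beta_sqr | exact: sum_Cmod_beta_sqr_qnr | | exact: card_qnr].
move=> a a_range a_qnr; split; first by lia.
by apply: Cmod_beta_sqr_foracle; rewrite // foracleE // a_range.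
Qed.
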